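(* Let $\mathcal{A}$ be a finite-dimensional pre-bialgebra over $\mathbb{C}$ such that $\mathcal{A}^*$ is semisimple. For $a\in\mathrm{Irr}(\mathcal{A}^* )$ let $\tau_a\in\mathcal{A}$ be the irreducible character, i.e. the element with $f(\tau_a)=\mathrm{Tr}\,\psi_a(f)$ for all $f\in\mathcal{A}^*$. Then: (1) for every representation $\phi:\mathcal{A}\to\mathrm{End}(V)$, every $n\ge1$, every basis $B$ of $\mathcal{A}$ with dual basis $\{\delta_y\}$, $$\phi^{\otimes n}\circ\Delta^{n-1}(\tau_a)=\sum_{y_1,\dots,y_n\in B}\mathrm{Tr}\big(\psi_a(\delta_{y_1})\cdots\psi_a(\delta_{y_n})\big)\,\phi(y_1)\otimes\cdots\otimes\phi(y_n);$$ (2) for all $a,b\in\mathrm{Irr}(\mathcal{A}^* )$, $\tau_a\tau_b=\sum_{c\in\mathrm{Irr}(\mathcal{A}^* )}N_{ab}^c\,\tau_c$ (product in $\mathcal{A}$), so the $\mathbb{Z}$-span of the $\tau_a$ is closed under multiplication.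
   Context: A pre-bialgebra is a finite-dimensional vector space $\mathcal{A}$ which is both a unital associative algebra and a coalgebra (coproduct $\Delta$, counit $\epsilon$) with $\Delta(xy)=\Delta(x)\Delta(y)$ (componentwise product in $\mathcal{A}\otimes\mathcal{A}$); no condition is imposed on $\Delta(1)$ or on $\epsilon$ of products. The dual $\mathcal{A}^*$ is a pre-bialgebra with product $(fg)(x)=(f\otimes g)(\Delta x)$, unit $\epsilon$, coproduct $\Delta(f)(x\otimes y)=f(xy)$ and counit $f\mapsto f(1)$. $\mathrm{Irr}(\mathcal{A}^* )$ is the set of isomorphism classes of irreducible representations of $\mathcal{A}^*$; for each class $a$ a representative $\psi_a:\mathcal{A}^*\to\mathrm{End}(W_a)$ is fixed. For representations $\psi_a,\psi_b$, the tensor product representation $\psi_a\boxtimes\psi_b$ is $f\mapsto(\psi_a\otimes\psi_b)(\Delta f)$ restricted to the range of the idempotent $(\psi_a\otimes\psi_b)(\Delta\epsilon)$; $N_{ab}^c$ is the multiplicity of $\psi_c$ in $\psi_a\boxtimes\psi_b$. $\Delta^{n-1}$ is the iterated coproduct. *)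

From HB Require Import structures.
From mathcomp Require Import all_boot all_algebra.
From mathcomp Require Import complex mxtens.
From mathcomp Require Import Rstruct.
From Stdlib Require Import Reals.

Set Implicit Arguments.
Unset Strict Implicit.
Unset Printing Implicit Defensive.

Import GRing.Theory.
Local Open Scope ring_scope.

Definition Cplx : numClosedFieldType := (Rdefinitions.R)[i].

Section PreBialgebra.
Variables (K : fieldType) (d : nat).

(* A pre-bialgebra of dimension d, given by its structure constants in a   *)
(* fixed basis (e_i)_{i < d}.  Elements of A are row vectors 'rV_d of       *)
(* coordinates, elements of A (x) A are d x d coefficient matrices          *)
(* (entry (i,j) = coefficient of e_i (x) e_j).                              *)
Record prebialg := PreBialg {
  pb_mul : 'I_d -> 'I_d -> 'rV[K]_d;
  pb_one : 'rV[K]_d;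
  pb_comul : 'I_d -> 'M[K]_d;          (* Delta(e_k) = sum (pb_comul k) i j e_i (x) e_j *)
  pb_counit : 'I_d -> K
}.

Variable A : prebialg.

(* basis vector e_i of A, resp. dual basis vector e^i of A^* *)
Definition pb_e (i : 'I_d) : 'rV[K]_d := delta_mx 0 i.

Definition pb_mulA (x y : 'rV[K]_d) : 'rV[K]_d :=
  \sum_(i < d) \sum_(j < d) (x 0 i * y 0 j) *: pb_mul A i j.

Definition pb_comulA (x : 'rV[K]_d) : 'M[K]_d :=
  \sum_(k < d) x 0 k *: pb_comul A k.

Definition pb_counitA (x : 'rV[K]_d) : K := \sum_(k < d) x 0 k * pb_counit A k.

(* componentwise product in A (x) A *)
Definition pbt_mul (M N : 'M[K]_d) : 'M[K]_d :=
  \matrix_(p, q) \sum_(i < d) \sum_(j < d) \sum_(k < d) \sum_(l < d)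
     M i j * N k l * (pb_mul A i k) 0 p * (pb_mul A j l) 0 q.

Definition is_prebialg : Prop :=
  [/\ (forall x y z, pb_mulA (pb_mulA x y) z = pb_mulA x (pb_mulA y z)),
      (forall x, pb_mulA (pb_one A) x = x /\ pb_mulA x (pb_one A) = x),
      (* coassociativity: (Delta (x) id) Delta = (id (x) Delta) Delta *)
      (forall k p q r : 'I_d,
         \sum_(i < d) pb_comul A k i r * pb_comul A i p q
         = \sum_(j < d) pb_comul A k p j * pb_comul A j q r),
      (* counit: (eps (x) id) Delta = id = (id (x) eps) Delta *)
      (forall k i : 'I_d,
         \sum_(j < d) pb_counit A j * pb_comul A k j i = (k == i)%:R /\
         \sum_(j < d) pb_comul A k i j * pb_counit A j = (k == i)%:R) &
      (forall x y, pb_comulA (pb_mulA x y) = pbt_mul (pb_comulA x) (pb_comulA y))].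

(* ---- The dual pre-bialgebra A^*.  f : 'rV_d represents the functional  *)
(* with f(e_i) = f 0 i.                                                    *)
Definition pb_pair (f x : 'rV[K]_d) : K := \sum_(i < d) f 0 i * x 0 i.

(* (f g)(x) = (f (x) g)(Delta x) *)
Definition pb_mulD (f g : 'rV[K]_d) : 'rV[K]_d :=
  \row_(k < d) \sum_(i < d) \sum_(j < d) pb_comul A k i j * f 0 i * g 0 j.

Definition pb_unitD : 'rV[K]_d := \row_(k < d) pb_counit A k.

Definition left_idealD (L : 'M[K]_d) : Prop :=
  forall g x : 'rV[K]_d, (x <= L)%MS -> (pb_mulD g x <= L)%MS.

Definition dual_semisimple : Prop :=
  forall L : 'M[K]_d, left_idealD L ->
    exists L' : 'M[K]_d, [/\ left_idealD L', (L :&: L' == (0 : 'M[K]_d))%MS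
                            & (L + L' == 1%:M)%MS].

(* ---- Representations (unital algebra homomorphisms into matrices,      *)
(* acting on column vectors).                                              *)
Definition is_repA m (phi : {linear 'rV[K]_d -> 'M[K]_m}) : Prop :=
  phi (pb_one A) = 1%:M /\ forall x y, phi (pb_mulA x y) = phi x *m phi y.

Definition is_repD w (psi : {linear 'rV[K]_d -> 'M[K]_w}) : Prop :=
  psi pb_unitD = 1%:M /\ forall f g, psi (pb_mulD f g) = psi f *m psi g.

(* subspaces of K^w are given as row spaces of matrices (rows = vectors);  *)
(* U is invariant iff psi(f) v \in U for every v \in U.                   *)
Definition invariantD w (psi : {linear 'rV[K]_d -> 'M[K]_w}) k
    (U : 'M[K]_(k, w)) : Prop :=
  forall f, (U *m (psi f)^T <= U)%MS.

Definition irreducibleD w (psi : {linear 'rV[K]_d -> 'M[K]_w}) : Prop :=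
  (0 < w)%nat /\
  forall U : 'M[K]_w, invariantD psi U -> (U == (0 : 'M[K]_w))%MS \/ row_full U.

Definition isoD w1 w2 (psi1 : {linear 'rV[K]_d -> 'M[K]_w1})
    (psi2 : {linear 'rV[K]_d -> 'M[K]_w2}) : Prop :=
  exists T : 'M[K]_(w1, w2),
    [/\ row_free T, row_full T & forall f, psi1 f *m T = T *m psi2 f].

(* (psi_a (x) psi_b)(Delta f), acting on K^wa (x) K^wb = K^(wa*wb)         *)
(* (Kronecker product);  Delta f = sum_{i,j} f(e_i e_j) e^i (x) e^j.       *)
Definition pb_box wa wb (psia : {linear 'rV[K]_d -> 'M[K]_wa})
    (psib : {linear 'rV[K]_d -> 'M[K]_wb}) (f : 'rV[K]_d) : 'M[K]_(wa * wb) :=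
  \sum_(i < d) \sum_(j < d)
     pb_pair f (pb_mul A i j) *: (psia (pb_e i) *t psib (pb_e j)).

(* The representation psia [x] psib is pb_box restricted to the range of the *)
(* idempotent P = pb_box pb_unitD.  [decomposition T cs] says that T is a        *)
(* linear isomorphism from K^(sum_i w (cs i)) onto range P intertwining the *)
(* direct sum of the psi (cs i) with psia [x] psib, i.e.                    *)
(*   psia [x] psib  ~=  (+)_(i < k) psi_(cs i).                             *)
Definition boxdecomp (I : finType) (w : I -> nat)
    (psi : forall c : I, {linear 'rV[K]_d -> 'M[K]_(w c)})
    (a b : I) (k : nat) (cs : 'I_k -> I)
    (T : 'M[K]_(w a * w b, \sum_(i < k) w (cs i))) : Prop :=
  [/\ row_free T^T,
      (T^T == (pb_box (psi a) (psi b) pb_unitD)^T)%MS &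
      forall f, pb_box (psi a) (psi b) f *m T
                = T *m \mxdiag_(i < k) psi (cs i) f].

Definition pb_mult (I : finType) k (cs : 'I_k -> I) (c : I) : nat :=
  #|[set i | cs i == c]|.

(* ---- Iterated coproduct Delta^(n-1) : A -> A^(x)n, with values given as *)
(* coefficient functions on n-tuples of basis indices.                    *)
(*   Delta^(-1) = epsilon,  Delta^(n) = (id (x) Delta^(n-1)) o Delta.      *)
Fixpoint iter_comul (n : nat) : 'rV[K]_d -> n.-tuple 'I_d -> K :=
  match n return 'rV[K]_d -> n.-tuple 'I_d -> K with
  | 0 => fun x _ => pb_counitA x
  | n'.+1 => fun x t =>
      \sum_(k < d) pb_comulA x (thead t) k * @iter_comul n' (pb_e k) (behead_tuple t)
  end.

(* End(K^m)^(x)n = End((K^m)^(x)n), matrices indexed by n-tuples:           *)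
(* M_1 (x) ... (x) M_n.                                                     *)
Definition tensn m n (M : 'I_n -> 'M[K]_m)
  : {ffun n.-tuple 'I_m * n.-tuple 'I_m -> K} :=
  [ffun rc => \prod_(k < n) M k (tnth rc.1 k) (tnth rc.2 k)].

Definition tenspow m (phi : {linear 'rV[K]_d -> 'M[K]_m}) n
    (X : n.-tuple 'I_d -> K) : {ffun n.-tuple 'I_m * n.-tuple 'I_m -> K} :=
  [ffun rc => \sum_(s : n.-tuple 'I_d)
                 X s * tensn (fun k => phi (pb_e (tnth s k))) rc].

End PreBialgebra.

From HB Require Import structures.
From mathcomp Require Import all_boot all_algebra.
From mathcomp Require Import complex mxtens.
From mathcomp Require Import ring.
From Stdlib Require Import Classical.

Set Implicit Arguments.
Unset Strict Implicit.
Unset Printing Implicit Defensive.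

Import GRing.Theory.
Local Open Scope ring_scope.

(** The map [X := (psi_a (x) psi_b) o Delta] on [A^*] is multiplicative, because
    the coproduct of [A^*] is dual to the product of [A] and the coproduct of [A]
    is multiplicative; moreover [tr X(f) = f(tau_a tau_b)].  Since the pairing
    separates the points of [A], (2) and the integrality of [tau_a tau_b] become
    trace identities.  For (2), [X(f)] lives on the range of the idempotent
    [X(eps)], so its trace is that of [psi_a [x] psi_b], i.e. of the given direct
    sum of irreducibles.  Integrality needs no given decomposition: the trace of
    any multiplicative, not necessarily unital, representation [rho] of [A^*] is
    an N-combination of irreducible characters, by induction on the dimension,
    splitting off first the image of the idempotent [rho(eps)], then any proper
    invariant subspace (traces add in block triangular form).  For (1),
    [tr psi_a(f_1 ... f_n) = (f_1 (x) ... (x) f_n)(Delta^(n-1) tau_a)],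
    and each basis vector of [A] is expanded in the basis [y] through [delta]. *)

Section LinearOf.
Variables (R : pzRingType) (U V : lmodType R) (F : U -> V).

Definition linear_fun of linear F := F.

Variable linF : linear F.
HB.instance Definition _ :=
  GRing.isLinear.Build R U V *:%R (linear_fun linF) linF.
Definition linear_of : {linear U -> V} := linear_fun linF.

End LinearOf.

Lemma ulsubmx_mul (K : pzSemiRingType) m n (X Y : 'M[K]_(m + n)) :
  ursubmx X = 0 -> ulsubmx (X *m Y) = ulsubmx X *m ulsubmx Y.
Proof.
move=> X_ur; rewrite -{1}[X]submxK -{1}[Y]submxK mulmx_block block_mxKul X_ur.
by rewrite mul0mx addr0.
Qed.

Lemma drsubmx_mul (K : pzSemiRingType) m n (X Y : 'M[K]_(m + n)) :
  ursubmx Y = 0 -> drsubmx (X *m Y) = drsubmx X *m drsubmx Y.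
Proof.
move=> Y_ur; rewrite -{1}[X]submxK -{1}[Y]submxK mulmx_block block_mxKdr Y_ur.
by rewrite mulmx0 add0r.
Qed.

Lemma mxtrace_tens (K : comPzRingType) m n (X : 'M[K]_m) (Y : 'M[K]_n) :
  \tr (X *t Y) = \tr X * \tr Y.
Proof. by rewrite /mxtrace mulr_sum; apply: eq_bigr => k _; rewrite mxE. Qed.

Lemma tensmx_sum (K : comPzRingType) (J : finType) m n p q (a b : J -> K)
    (X : J -> 'M[K]_(m, n)) (Y : J -> 'M[K]_(p, q)) :
  (\sum_i a i *: X i) *t (\sum_j b j *: Y j)
  = \sum_i \sum_j (a i * b j) *: (X i *t Y j).
Proof.
apply/matrixP => x y; rewrite mxE !summxE big_distrl /=.
apply: eq_bigr => i _; rewrite summxE big_distrr /=; apply: eq_bigr => j _.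
by rewrite !mxE /= -!mulrA; congr (_ * _); rewrite mulrCA.
Qed.

(* T identifies K^S with the range of the idempotent P, on which X lives. *)
Lemma mxtrace_intertwined (K : fieldType) n S (P X : 'M[K]_n)
    (T : 'M[K]_(n, S)) (Y : 'M[K]_S) :
  P *m P = P -> P *m X = X -> row_free T^T -> (T^T == P^T)%MS ->
  X *m T = T *m Y -> \tr X = \tr Y.
Proof.
move=> PP PX Tfree /andP [sTP sPT] XT.
have ET : T = P *m (T^T *m pinvmx P^T)^T.
  by apply: trmx_inj; rewrite trmx_mul trmxK mulmxKpV.
set Z := (P^T *m pinvmx T^T)^T.
have EP : P = T *m Z by apply: trmx_inj; rewrite trmx_mul trmxK mulmxKpV.
have PT : P *m T = T by rewrite {1}ET mulmxA PP -ET.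
have ZT : Z *m T = 1%:M.
  apply: trmx_inj; apply: (row_free_inj Tfree).
  by rewrite trmx1 mul1mx -trmx_mul mulmxA -EP PT.
by rewrite -PX {1}EP -mulmxA mxtrace_mulC -mulmxA XT mulmxA ZT mul1mx.
Qed.

Lemma isoD_mxtrace (K : fieldType) d w1 w2
    (rho1 : {linear 'rV[K]_d -> 'M[K]_w1})
    (rho2 : {linear 'rV[K]_d -> 'M[K]_w2}) :
  isoD rho1 rho2 -> forall f, \tr (rho1 f) = \tr (rho2 f).
Proof.
case=> T [/row_freeP [Y TY] /row_fullP [X XT] rhoT] f.
have YX : Y = X by rewrite -[Y]mul1mx -XT -mulmxA TY mulmx1.
rewrite -[rho1 f]mulmx1 -TY mulmxA rhoT -mulmxA mxtrace_mulC -mulmxA YX XT.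
by rewrite mulmx1.
Qed.

Section TupleSums.
Variable T : finType.

Lemma sum_tuple0 (R : nmodType) (F : 0.-tuple T -> R) : \sum_s F s = F [tuple].
Proof. by rewrite (big_pred1 [tuple]) // => s; apply/esym/eqP/tuple0. Qed.

Lemma sum_tupleS (R : nmodType) n (F : n.+1.-tuple T -> R) :
  \sum_s F s = \sum_i \sum_(t : n.-tuple T) F [tuple of i :: t].
Proof.
rewrite pair_big /=.
rewrite (reindex (fun p : T * n.-tuple T => [tuple of p.1 :: p.2])) //=.
exists (fun s : n.+1.-tuple T => (thead s, [tuple of behead s])).
  by move=> [i t] _ /=; rewrite theadE; congr (_, _); apply: val_inj.
by move=> s _ /=; rewrite [RHS]tuple_eta; apply: val_inj.
Qed.

Lemma sum_prod_tuple (R : comPzSemiRingType) n (G : 'I_n -> T -> R) :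
  \sum_(s : n.-tuple T) \prod_(k < n) G k (tnth s k)
  = \prod_(k < n) \sum_j G k j.
Proof.
rewrite bigA_distr_bigA (reindex (fun s : n.-tuple T => [ffun k => tnth s k])).
  by apply: eq_bigr => s _; apply: eq_bigr => k _; rewrite ffunE.
exists (fun g : {ffun 'I_n -> T} => [tuple g k | k < n]) => [s _|g _].
  by apply: eq_from_tnth => k; rewrite tnth_mktuple ffunE.
by apply/ffunP => k; rewrite ffunE tnth_mktuple.
Qed.

End TupleSums.

Section NestedSums.
Variable I : finType.

Lemma exchange_big4 (R : nmodType) (J : finType)
    (F : J -> I -> I -> I -> I -> R) :
  \sum_u \sum_i \sum_j \sum_k \sum_l F u i j k l
  = \sum_i \sum_j \sum_k \sum_l \sum_u F u i j k l.
Proof.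
rewrite exchange_big; apply: eq_bigr => i _; rewrite exchange_big.
apply: eq_bigr => j _; rewrite exchange_big; apply: eq_bigr => k _.
exact: exchange_big.
Qed.

Lemma mulr_suml4 (R : pzSemiRingType) (F : I -> I -> I -> I -> R) a :
  (\sum_i \sum_j \sum_k \sum_l F i j k l) * a
  = \sum_i \sum_j \sum_k \sum_l F i j k l * a.
Proof.
rewrite mulr_suml; apply: eq_bigr => i _; rewrite mulr_suml.
apply: eq_bigr => j _; rewrite mulr_suml; apply: eq_bigr => k _.
exact: mulr_suml.
Qed.

Lemma scaler_suml4 (R : pzRingType) (V : lmodType R) (F : I -> I -> I -> I -> R)
    (v : V) :
  (\sum_i \sum_j \sum_k \sum_l F i j k l) *: v
  = \sum_i \sum_j \sum_k \sum_l F i j k l *: v.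
Proof.
rewrite scaler_suml; apply: eq_bigr => i _; rewrite scaler_suml.
apply: eq_bigr => j _; rewrite scaler_suml; apply: eq_bigr => k _.
exact: scaler_suml.
Qed.

End NestedSums.

Section InvariantSplit.
Variables (K : fieldType) (d N : nat) (mul : 'rV[K]_d -> 'rV[K]_d -> 'rV[K]_d).
Variable rho : {linear 'rV[K]_d -> 'M[K]_N}.
Hypothesis rhoM : forall f g, rho (mul f g) = rho f *m rho g.
Variable U : 'M[K]_N.
Hypothesis U_invariant : forall f, (U *m (rho f)^T <= U)%MS.

(* A basis of K^N whose first vectors span U; in it, (rho f)^T is block
   lower triangular. *)
Let B := col_mx (row_base U) (row_base (U^C)%MS).

Let B_full : row_full B.
Proof.
rewrite /row_full /B -addsmxE.
by rewrite (adds_eqmx (eq_row_base U) (eq_row_base _)); apply: addsmx_compl_full.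
Qed.

Let B_free : row_free B.
Proof.
by rewrite /row_free (eqP B_full) mxrank_compl subnKC // rank_leq_col.
Qed.

Let pinvB_B : pinvmx B *m B = 1%:M.
Proof. by rewrite -[pinvmx B]mul1mx mulmxKpV // sub1mx B_full. Qed.

Definition rep_in_basis f := B *m (rho f)^T *m pinvmx B.

Lemma rep_in_basisB f : rep_in_basis f *m B = B *m (rho f)^T.
Proof. by rewrite /rep_in_basis -mulmxA pinvB_B mulmx1. Qed.

Lemma rep_in_basisM f g :
  rep_in_basis (mul f g) = rep_in_basis g *m rep_in_basis f.
Proof.
apply: (row_free_inj B_free) => /=.
by rewrite rep_in_basisB -mulmxA rep_in_basisB !mulmxA rep_in_basisB rhoM
  trmx_mul mulmxA.
Qed.

Lemma rep_in_basis_ur f : ursubmx (rep_in_basis f) = 0.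
Proof.
have sU : (row_base U *m (rho f)^T <= row_base U)%MS.
  rewrite (eqmxMr _ (eq_row_base U)) (eq_row_base U); exact: U_invariant.
set Y := row_base U *m (rho f)^T *m pinvmx (row_base U).
have YU : Y *m row_base U = row_base U *m (rho f)^T by rewrite mulmxKpV.
have := rep_in_basisB f.
rewrite -{1}[rep_in_basis f]submxK /B mul_block_col mul_col_mx.
move=> /eq_col_mx [ul _].
have : row_mx (ulsubmx (rep_in_basis f) - Y) (ursubmx (rep_in_basis f)) *m B
       = 0 *m B.
  by rewrite mul0mx /B mul_row_col mulmxBl addrAC ul YU subrr.
by move/(row_free_inj B_free)/eqP; rewrite row_mx_eq0 => /andP [_ /eqP].
Qed.

Lemma rep_in_basis_linear : linear rep_in_basis.
Proof.
move=> a u v; rewrite /rep_in_basis linearP /= linearD /= linearZ /=.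
by rewrite mulmxDr mulmxDl -scalemxAr -scalemxAl.
Qed.

Definition subrep_fun f := (ulsubmx (rep_in_basis f))^T.
Definition quorep_fun f := (drsubmx (rep_in_basis f))^T.

Lemma subrep_linear : linear subrep_fun.
Proof.
move=> a u v; rewrite /subrep_fun rep_in_basis_linear.
by apply/matrixP => i j; rewrite !mxE.
Qed.

Lemma quorep_linear : linear quorep_fun.
Proof.
move=> a u v; rewrite /quorep_fun rep_in_basis_linear.
by apply/matrixP => i j; rewrite !mxE.
Qed.

Definition subrep := linear_of subrep_linear.
Definition quorep := linear_of quorep_linear.

Lemma subrepM f g : subrep (mul f g) = subrep f *m subrep g.
Proof.
rewrite /= /linear_fun /subrep_fun rep_in_basisM.
by rewrite ulsubmx_mul ?rep_in_basis_ur // trmx_mul.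
Qed.

Lemma quorepM f g : quorep (mul f g) = quorep f *m quorep g.
Proof.
rewrite /= /linear_fun /quorep_fun rep_in_basisM.
by rewrite drsubmx_mul ?rep_in_basis_ur // trmx_mul.
Qed.

Lemma mxtrace_subrep_quorep f : \tr (rho f) = \tr (subrep f) + \tr (quorep f).
Proof.
rewrite /= /linear_fun /subrep_fun /quorep_fun !mxtrace_tr.
rewrite -(mxtrace_block _ (ursubmx (rep_in_basis f)) (dlsubmx (rep_in_basis f))).
rewrite submxK /rep_in_basis.
by rewrite mxtrace_mulC mulmxA pinvB_B mul1mx mxtrace_tr.
Qed.

End InvariantSplit.

Section PreBialgebra.
Variables (K : fieldType) (d : nat) (A : prebialg K d).
Hypothesis HA : is_prebialg A.
Local Notation e := (pb_e K).
Implicit Types (f g x y : 'rV[K]_d).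

Lemma pb_eE (i j : 'I_d) : e i 0 j = (i == j)%:R.
Proof. by rewrite /pb_e mxE eqxx eq_sym. Qed.

Lemma sum_mul_pb_e (F : 'I_d -> K) i : \sum_j F j * e i 0 j = F i.
Proof.
rewrite (bigD1 i) //= pb_eE eqxx mulr1 big1 ?addr0 // => j /negbTE ji.
by rewrite pb_eE eq_sym ji mulr0.
Qed.

Lemma pb_pair_er f i : pb_pair f (e i) = f 0 i.
Proof. exact: sum_mul_pb_e. Qed.

Lemma pb_pair_el x i : pb_pair (e i) x = x 0 i.
Proof.
by rewrite -(sum_mul_pb_e (fun j => x 0 j)); apply: eq_bigr => j _; rewrite mulrC.
Qed.

Lemma pb_pair_inj x y : (forall f, pb_pair f x = pb_pair f y) -> x = y.
Proof. by move=> xy; apply/rowP => i; rewrite -!pb_pair_el xy. Qed.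

Lemma pb_pair_sumr (J : finType) (a : J -> K) (x : J -> 'rV[K]_d) f :
  pb_pair f (\sum_c a c *: x c) = \sum_c a c * pb_pair f (x c).
Proof.
rewrite /pb_pair; under eq_bigr => k _ do rewrite summxE big_distrr /=.
rewrite exchange_big; apply: eq_bigr => c _; rewrite big_distrr /=.
by apply: eq_bigr => k _; rewrite mxE mulrCA.
Qed.

Lemma pb_pairPl f g x a :
  pb_pair (a *: f + g) x = a * pb_pair f x + pb_pair g x.
Proof.
rewrite /pb_pair big_distrr -big_split /=; apply: eq_bigr => k _.
by rewrite !mxE mulrDl mulrA.
Qed.

Lemma pb_pair_mulA f x y : pb_pair f (pb_mulA A x y)
  = \sum_i \sum_j x 0 i * y 0 j * pb_pair f (pb_mul A i j).
Proof.
rewrite /pb_pair /pb_mulA.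
under eq_bigr => k _ do rewrite !summxE big_distrr /=.
rewrite exchange_big; apply: eq_bigr => i _.
under eq_bigr => k _ do rewrite summxE big_distrr /=.
rewrite exchange_big; apply: eq_bigr => j _.
by rewrite big_distrr; apply: eq_bigr => k _ /=; rewrite mxE mulrCA.
Qed.

Lemma pb_pair_mulD f g x : pb_pair (pb_mulD A f g) x
  = \sum_i \sum_j pb_comulA A x i j * f 0 i * g 0 j.
Proof.
rewrite /pb_pair /pb_comulA.
under eq_bigr => k _ do rewrite mxE big_distrl /=.
rewrite exchange_big; apply: eq_bigr => i _.
under eq_bigr => k _ do rewrite big_distrl /=.
rewrite exchange_big; apply: eq_bigr => j _.
by rewrite !summxE !big_distrl; apply: eq_bigr => k _ /=; rewrite !mxE; ring.
Qed.

Lemma pb_mulA_suml (J : finType) (c : J -> K) (x : J -> 'rV[K]_d) y :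
  pb_mulA A (\sum_a c a *: x a) y = \sum_a c a *: pb_mulA A (x a) y.
Proof.
rewrite /pb_mulA.
under eq_bigr => i _ do under eq_bigr => j _ do
  rewrite summxE big_distrl scaler_suml /=.
under eq_bigr => i _ do rewrite exchange_big /=.
rewrite exchange_big /=; apply: eq_bigr => a _.
rewrite scaler_sumr; apply: eq_bigr => i _; rewrite scaler_sumr.
by apply: eq_bigr => j _; rewrite mxE scalerA mulrA.
Qed.

Lemma pb_mulA_sumr (J : finType) (c : J -> K) x (y : J -> 'rV[K]_d) :
  pb_mulA A x (\sum_a c a *: y a) = \sum_a c a *: pb_mulA A x (y a).
Proof.
rewrite /pb_mulA.
under eq_bigr => i _ do under eq_bigr => j _ do
  rewrite summxE big_distrr scaler_suml /=.
under eq_bigr => i _ do rewrite exchange_big /=.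
rewrite exchange_big /=; apply: eq_bigr => a _.
rewrite scaler_sumr; apply: eq_bigr => i _; rewrite scaler_sumr.
by apply: eq_bigr => j _; rewrite mxE scalerA mulrCA.
Qed.

Lemma pb_mulA_e i j : pb_mulA A (e i) (e j) = pb_mul A i j.
Proof.
rewrite /pb_mulA (bigD1 i) //= [X in _ + X]big1 ?addr0; last first.
  move=> k /negbTE ki; apply: big1 => l _.
  by rewrite pb_eE eq_sym ki mul0r scale0r.
rewrite (bigD1 j) //= [X in _ + X]big1 ?addr0; last first.
  by move=> l /negbTE lj; rewrite !pb_eE eq_sym lj mulr0 scale0r.
by rewrite !pb_eE !eqxx mulr1 scale1r.
Qed.

Lemma pb_comulA_e k : pb_comulA A (e k) = pb_comul A k.
Proof.
rewrite /pb_comulA (bigD1 k) //= big1 ?addr0; last first.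
  by move=> i /negbTE ik; rewrite pb_eE eq_sym ik scale0r.
by rewrite pb_eE eqxx scale1r.
Qed.

Lemma pb_mulD_e i k : pb_mulD A (e i) (e k) = \sum_p pb_comul A p i k *: e p.
Proof.
apply/rowP => p; rewrite summxE mxE.
under eq_bigr => i' _ do
  rewrite (sum_mul_pb_e (fun j => pb_comul A p i' j * e i 0 i')).
rewrite sum_mul_pb_e.
under [RHS]eq_bigr => q _ do rewrite mxE pb_eE eq_sym -pb_eE.
by rewrite sum_mul_pb_e.
Qed.

Lemma pb_mulD_unitl f : pb_mulD A (pb_unitD A) f = f.
Proof.
case: HA => _ _ _ counit _.
apply/rowP => k; rewrite mxE exchange_big /=.
have collapse j : \sum_i pb_comul A k i j * pb_unitD A 0 i * f 0 j
                  = (k == j)%:R * f 0 j.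
  rewrite -big_distrl /= -(counit k j).1.
  by congr (_ * _); apply: eq_bigr => i _; rewrite mxE mulrC.
under eq_bigr => j _ do rewrite collapse.
rewrite -(sum_mul_pb_e (fun j => f 0 j)).
by apply: eq_bigr => j _; rewrite pb_eE mulrC.
Qed.

Lemma pb_pair_iter_comul n x (fs : 'I_n -> 'rV[K]_d) :
  pb_pair (\big[pb_mulD A/pb_unitD A]_(k < n) fs k) x
  = \sum_(t : n.-tuple 'I_d) iter_comul A x t * \prod_(k < n) fs k 0 (tnth t k).
Proof.
elim: n x fs => [|n IH] x fs.
  rewrite sum_tuple0 !big_ord0 mulr1 /= /pb_counitA /pb_pair.
  by apply: eq_bigr => k _; rewrite mxE mulrC.
rewrite big_ord_recl sum_tupleS pb_pair_mulD; apply: eq_bigr => i _.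
under [RHS]eq_bigr => t _ do
  rewrite /= theadE big_ord_recl tnth0 big_distrl /=.
rewrite [RHS]exchange_big /=; apply: eq_bigr => j _.
rewrite -(pb_pair_er (\big[_/_]_(k < n) fs (lift ord0 k))) IH big_distrr /=.
apply: eq_bigr => t _.
have -> : behead_tuple [tuple of i :: t] = t by apply: val_inj.
under [in RHS]eq_bigr => k _ do rewrite tnthS.
by ring.
Qed.

Lemma is_repD_prod w (psi : {linear 'rV[K]_d -> 'M[K]_w}) n
    (fs : 'I_n -> 'rV[K]_d) : is_repD A psi ->
  psi (\big[pb_mulD A/pb_unitD A]_(k < n) fs k) = \prod_(k < n) psi (fs k).
Proof.
by case=> psi1 psiM; apply: big_morph => [f g|//]; rewrite psiM mulmxE.
Qed.

Definition pb_comulD f : 'M[K]_d := \matrix_(i, j) pb_pair f (pb_mul A i j).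

(* The product of A^* (x) A^*:
   (e^i (x) e^k) (e^j (x) e^l) = e^i e^j (x) e^k e^l. *)
Definition pbt_mulD (M N : 'M[K]_d) : 'M[K]_d :=
  \matrix_(p, q) \sum_i \sum_j \sum_k \sum_l
     M i k * N j l * (pb_comul A p i j * pb_comul A q k l).

Lemma pb_comulD_mul f g :
  pb_comulD (pb_mulD A f g) = pbt_mulD (pb_comulD f) (pb_comulD g).
Proof.
case: HA => _ _ _ _ comulM.
apply/matrixP => p q; rewrite !mxE pb_pair_mulD -pb_mulA_e comulM !pb_comulA_e.
under eq_bigr => u _ do under eq_bigr => v _ do rewrite mxE !mulr_suml4.
under eq_bigr => u _ do rewrite exchange_big4.
rewrite exchange_big4; do 4!(apply: eq_bigr => ? _).
rewrite !mxE /pb_pair big_distrlr mulr_suml; apply: eq_bigr => u _.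
by rewrite mulr_suml; apply: eq_bigr => v _ /=; ring.
Qed.

Section Box.
Variables (wa wb : nat) (psia : {linear 'rV[K]_d -> 'M[K]_wa})
  (psib : {linear 'rV[K]_d -> 'M[K]_wb}).
Hypotheses (psiaM : forall f g, psia (pb_mulD A f g) = psia f *m psia g)
           (psibM : forall f g, psib (pb_mulD A f g) = psib f *m psib g).
Local Notation box := (pb_box A psia psib).

Definition tens_rep (M : 'M[K]_d) : 'M[K]_(wa * wb) :=
  \sum_i \sum_j M i j *: (psia (e i) *t psib (e j)).

Lemma pb_boxE f : box f = tens_rep (pb_comulD f).
Proof.
by apply: eq_bigr => i _; apply: eq_bigr => j _; rewrite mxE.
Qed.

Lemma rep_mul_pb_e w (psi : {linear 'rV[K]_d -> 'M[K]_w}) :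
    (forall f g, psi (pb_mulD A f g) = psi f *m psi g) ->
  forall i j, psi (e i) *m psi (e j) = \sum_p pb_comul A p i j *: psi (e p).
Proof.
move=> psiM i j; rewrite -psiM pb_mulD_e linear_sum.
by apply: eq_bigr => p _; rewrite linearZ.
Qed.

Lemma tens_repM M N : tens_rep (pbt_mulD M N) = tens_rep M *m tens_rep N.
Proof.
rewrite /tens_rep mulmx_suml.
under [RHS]eq_bigr => i _ do rewrite mulmx_suml.
under [RHS]eq_bigr => i _ do under eq_bigr => k _ do rewrite mulmx_sumr.
under [RHS]eq_bigr => i _ do under eq_bigr => k _ do under eq_bigr => j _ do
  rewrite mulmx_sumr.
under [RHS]eq_bigr => i _ do rewrite exchange_big /=.
under [RHS]eq_bigr => i _ do under eq_bigr => j _ do under eq_bigr => k _ do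
  under eq_bigr => l _ do rewrite -scalemxAl -scalemxAr scalerA tensmx_mul
    !rep_mul_pb_e // tensmx_sum scaler_sumr.
under [LHS]eq_bigr => p _ do under eq_bigr => q _ do rewrite mxE scaler_suml4.
under [LHS]eq_bigr => p _ do rewrite exchange_big4.
rewrite exchange_big4; do 4!(apply: eq_bigr => ? _).
apply: eq_bigr => p _; rewrite scaler_sumr.
by apply: eq_bigr => q _; rewrite scalerA.
Qed.

Lemma pb_boxM f g : box (pb_mulD A f g) = box f *m box g.
Proof. by rewrite !pb_boxE pb_comulD_mul tens_repM. Qed.

Lemma pb_box_linear : linear box.
Proof.
move=> a u v; rewrite /pb_box scaler_sumr -big_split /=; apply: eq_bigr => i _.
rewrite scaler_sumr -big_split /=; apply: eq_bigr => j _.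
by rewrite pb_pairPl scalerDl scalerA.
Qed.

Lemma pb_box_unitl f : box (pb_unitD A) *m box f = box f.
Proof. by rewrite -pb_boxM pb_mulD_unitl. Qed.

Lemma mxtrace_pb_box ta tb :
    (forall f, pb_pair f ta = \tr (psia f)) ->
    (forall f, pb_pair f tb = \tr (psib f)) ->
  forall f, \tr (box f) = pb_pair f (pb_mulA A ta tb).
Proof.
move=> char_a char_b f; rewrite pb_pair_mulA /pb_box raddf_sum.
apply: eq_bigr => i _; rewrite raddf_sum; apply: eq_bigr => j _.
by rewrite /= mxtraceZ mxtrace_tens -char_a -char_b !pb_pair_el mulrC.
Qed.

End Box.

Section NatCharacter.
Variables (I : finType) (w : I -> nat)
  (psi : forall c, {linear 'rV[K]_d -> 'M[K]_(w c)}).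
Hypothesis psi_complete : forall w' (rho : {linear 'rV[K]_d -> 'M[K]_w'}),
  is_repD A rho -> irreducibleD rho -> exists c, isoD rho (psi c).

Definition nat_character N (rho : {linear 'rV[K]_d -> 'M[K]_N}) :=
  exists Nc : I -> nat, forall f, \tr (rho f) = \sum_c (Nc c)%:R * \tr (psi c f).

Lemma nat_character0 N (rho : {linear 'rV[K]_d -> 'M[K]_N}) :
  (forall f, \tr (rho f) = 0) -> nat_character rho.
Proof.
by move=> tr0; exists (fun=> 0%N) => f; rewrite tr0 big1 // => c; rewrite mul0r.
Qed.

Lemma nat_character_split N (rho : {linear 'rV[K]_d -> 'M[K]_N}) (U : 'M[K]_N) :
    (forall f g, rho (pb_mulD A f g) = rho f *m rho g) ->
    (forall f, (U *m (rho f)^T <= U)%MS) -> U != 0 -> ~~ row_full U ->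
    (forall N', (N' < N)%N -> forall rho' : {linear 'rV[K]_d -> 'M[K]_N'},
       (forall f g, rho' (pb_mulD A f g) = rho' f *m rho' g) ->
       nat_character rho') ->
  nat_character rho.
Proof.
move=> rhoM U_inv U_neq0 U_nfull IH.
have rankU_lt : (\rank U < N)%N by rewrite ltn_neqAle rank_leq_col andbT.
have rankUC_lt : (\rank (U^C)%MS < N)%N.
  rewrite mxrank_compl ltn_subrL (leq_ltn_trans _ rankU_lt) // andbT.
  by rewrite lt0n mxrank_eq0.
have [N1 tr1] := IH _ rankU_lt _ (subrepM rhoM U_inv).
have [N2 tr2] := IH _ rankUC_lt _ (quorepM rhoM U_inv).
exists (fun c => N1 c + N2 c)%N => f.
rewrite (mxtrace_subrep_quorep rho U f) tr1 tr2 -big_split /=.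
by apply: eq_bigr => c _; rewrite natrD mulrDl.
Qed.

Lemma mul_nat_character N (rho : {linear 'rV[K]_d -> 'M[K]_N}) :
  (forall f g, rho (pb_mulD A f g) = rho f *m rho g) -> nat_character rho.
Proof.
elim/ltn_ind: N rho => N IH rho rhoM.
have [N0|N_gt0] := posnP N.
  by apply: nat_character0 => f; subst N; rewrite /mxtrace big_ord0.
set E := rho (pb_unitD A).
have rhoE f : rho f = E *m rho f by rewrite /E -rhoM pb_mulD_unitl.
have [E0|E_neq0] := eqVneq E 0.
  by apply: nat_character0 => f; rewrite rhoE E0 mul0mx mxtrace0.
have [E1|E_neq1] := eqVneq E 1%:M.
  have [irr|] := classic (irreducibleD rho).
    have [c rho_c] := psi_complete (conj E1 rhoM) irr.
    exists (fun c' => (c' == c : nat)) => f; rewrite (isoD_mxtrace rho_c).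
    rewrite (bigD1 c) //= eqxx mul1r big1 ?addr0 // => c' /negbTE ->.
    by rewrite mul0r.
  move=> not_irr.
  have [U [U_inv U_neq0 U_nfull]] : exists U : 'M[K]_N,
      [/\ invariantD rho U, ~ (U == (0 : 'M[K]_N))%MS & ~ row_full U].
    apply: NNPP => no_U; apply: not_irr; split=> // U U_inv.
    by apply: NNPP => /not_or_and [U_neq0 U_nfull]; apply: no_U; exists U.
  apply: (nat_character_split rhoM U_inv) => //; last exact/negP.
  by apply/eqP => U0; apply: U_neq0; rewrite U0 !sub0mx.
have EE : E^T *m E^T = E^T by rewrite -trmx_mul -rhoE.
apply: (nat_character_split (U := E^T) rhoM) => //.
- move=> f; have -> : (rho f)^T = (rho f)^T *m E^T by rewrite -trmx_mul -rhoE.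
  by rewrite mulmxA submxMl.
- by rewrite trmx_eq0.
- apply/negP => /row_fullP [X XE]; move/eqP: E_neq1; apply; apply: trmx_inj.
  by rewrite trmx1 -XE -{2}EE mulmxA XE mul1mx.
Qed.

End NatCharacter.

Lemma dual_basis_expansion (y delta : 'I_d -> 'rV[K]_d) :
    (forall i j, pb_pair (delta j) (y i) = (i == j)%:R) ->
  forall x, x = \sum_j pb_pair (delta j) x *: y j.
Proof.
move=> dual x; pose Y := \matrix_(i < d) y i; pose D := \matrix_(j < d) delta j.
have YD : Y *m D^T = 1%:M.
  apply/matrixP => i j; rewrite !mxE -dual /pb_pair.
  by apply: eq_bigr => k _; rewrite !mxE mulrC.
rewrite -[x in LHS]mulmx1 -(mulmx1C YD) mulmxA mulmx_sum_row.
apply: eq_bigr => j _; rewrite rowK; congr (_ *: _).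
by rewrite !mxE /pb_pair; apply: eq_bigr => k _; rewrite !mxE mulrC.
Qed.

Section Characters.
Variables (I : finType) (w : I -> nat)
  (psi : forall c, {linear 'rV[K]_d -> 'M[K]_(w c)}).
Hypothesis psi_rep : forall c, is_repD A (psi c).
Variable tau : I -> 'rV[K]_d.
Hypothesis tau_char : forall c f, pb_pair f (tau c) = \tr (psi c f).

Let psiM c : forall f g, psi c (pb_mulD A f g) = psi c f *m psi c g.
Proof. exact: (psi_rep c).2. Qed.

Lemma mxtrace_prod_char a n (fs : 'I_n -> 'rV[K]_d) :
  \tr (\prod_(k < n) psi a (fs k))
  = \sum_(t : n.-tuple 'I_d)
      iter_comul A (tau a) t * \prod_(k < n) fs k 0 (tnth t k).
Proof. by rewrite -is_repD_prod // -tau_char pb_pair_iter_comul. Qed.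

Lemma tenspow_iter_comul_char a m (phi : {linear 'rV[K]_d -> 'M[K]_m}) n
    (y delta : 'I_d -> 'rV[K]_d) :
    (forall i j, pb_pair (delta j) (y i) = (i == j)%:R) ->
  tenspow phi (@iter_comul K d A n (tau a))
  = [ffun rc => \sum_(s : n.-tuple 'I_d)
       \tr (\prod_(k < n) psi a (delta (tnth s k)))
       * tensn (fun k => phi (y (tnth s k))) rc].
Proof.
move=> dual; apply/ffunP => rc; rewrite !ffunE.
have phi_e t : phi (e t) = \sum_j delta j 0 t *: phi (y j).
  rewrite {1}(dual_basis_expansion dual (e t)) linear_sum.
  by apply: eq_bigr => j _; rewrite linearZ pb_pair_er.
under [RHS]eq_bigr => s _ do rewrite mxtrace_prod_char big_distrl /=.
rewrite [RHS]exchange_big /=; apply: eq_bigr => t _.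
under [RHS]eq_bigr => s _ do rewrite ffunE -mulrA -big_split /=.
rewrite -mulr_sumr ffunE (sum_prod_tuple (fun k j =>
  delta j 0 (tnth t k) * phi (y j) (tnth rc.1 k) (tnth rc.2 k))).
congr (_ * _); apply: eq_bigr => k _; rewrite phi_e summxE.
by apply: eq_bigr => j _; rewrite mxE.
Qed.

Lemma mul_char_boxdecomp a b k (cs : 'I_k -> I)
    (T : 'M[K]_(w a * w b, \sum_(i < k) w (cs i))) :
  @boxdecomp K d A I w psi a b k cs T ->
  pb_mulA A (tau a) (tau b) = \sum_c (pb_mult cs c)%:R *: tau c.
Proof.
case=> T_free T_range T_box; apply: pb_pair_inj => f.
rewrite -(mxtrace_pb_box (tau_char a) (tau_char b)).
rewrite (mxtrace_intertwined (pb_box_unitl (psiM a) (psiM b) _)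
  (pb_box_unitl (psiM a) (psiM b) f) T_free T_range (T_box f)).
rewrite mxtrace_mxdiag pb_pair_sumr.
under [RHS]eq_bigr => c _ do rewrite tau_char.
rewrite (partition_big cs predT) //=; apply: eq_bigr => c _.
rewrite (eq_bigr (fun _ => \tr (psi c f))); last by move=> i /eqP ->.
transitivity (\sum_(i in [set i | cs i == c]) \tr (psi c f)).
  by apply: eq_bigl => i; rewrite inE.
by rewrite sumr_const mulr_natl.
Qed.

Hypothesis psi_complete : forall w' (rho : {linear 'rV[K]_d -> 'M[K]_w'}),
  is_repD A rho -> irreducibleD rho -> exists c, isoD rho (psi c).

Lemma mul_char_nat_comb a b : exists Nc : I -> nat,
  pb_mulA A (tau a) (tau b) = \sum_c (Nc c)%:R *: tau c.
Proof.
have [Nc trN] := mul_nat_character psi_complete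
  (rho := linear_of (pb_box_linear (psi a) (psi b))) (pb_boxM (psiM a) (psiM b)).
exists Nc; apply: pb_pair_inj => f.
rewrite -(mxtrace_pb_box (tau_char a) (tau_char b)) [LHS]trN pb_pair_sumr.
by apply: eq_bigr => c _; rewrite tau_char.
Qed.

Lemma mul_int_comb_char (alpha beta : I -> int) : exists gamma : I -> int,
  pb_mulA A (\sum_a (alpha a)%:~R *: tau a) (\sum_b (beta b)%:~R *: tau b)
  = \sum_c (gamma c)%:~R *: tau c.
Proof.
pose Zspan x := exists gamma : I -> int, x = \sum_c (gamma c)%:~R *: tau c.
have Zspan0 : Zspan 0.
  by exists (fun=> 0); rewrite big1 // => c _; rewrite scale0r.
have ZspanD x y : Zspan x -> Zspan y -> Zspan (x + y).
  move=> [g ->] [h ->]; exists (fun c => g c + h c); rewrite -big_split.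
  by apply: eq_bigr => c _; rewrite intrD scalerDl.
have ZspanZ z x : Zspan x -> Zspan (z%:~R *: x).
  move=> [g ->]; exists (fun c => z * g c); rewrite scaler_sumr.
  by apply: eq_bigr => c _; rewrite intrM scalerA.
rewrite pb_mulA_suml; apply: (big_ind Zspan) => // a _; apply: (ZspanZ).
rewrite pb_mulA_sumr; apply: (big_ind Zspan) => // b _; apply: (ZspanZ).
by have [Nc ->] := mul_char_nat_comb a b; exists (fun c => (Nc c)%:Z).
Qed.

End Characters.

End PreBialgebra.

Theorem proposition4p3
  (d : nat) (A : prebialg Cplx d)
  (HA : is_prebialg A)
  (Hss : dual_semisimple A)
  (* Irr(A-dual): a complete set of pairwise non-isomorphic irreducible      *)
  (* representations psi c : A-dual -> End(W_c), W_c = C^(w c).              *)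
  (I : finType) (w : I -> nat)
  (psi : forall c : I, {linear 'rV[Cplx]_d -> 'M[Cplx]_(w c)})
  (Hrep : forall c, is_repD A (psi c))
  (Hirr : forall c, irreducibleD (psi c))
  (Hdist : forall c c', isoD (psi c) (psi c') -> c = c')
  (Hcomplete : forall (w' : nat) (rho : {linear 'rV[Cplx]_d -> 'M[Cplx]_w'}),
      is_repD A rho -> irreducibleD rho -> exists c, isoD rho (psi c))
  (* the irreducible characters tau_a in A *)
  (tau : I -> 'rV[Cplx]_d)
  (Htau : forall a (f : 'rV[Cplx]_d), pb_pair f (tau a) = \tr (psi a f)) :
  (* (1) *)
  (forall (a : I) (m : nat) (phi : {linear 'rV[Cplx]_d -> 'M[Cplx]_m}),
     is_repA A phi ->
     forall n : nat, (0 < n)%nat ->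
     forall (y delta : 'I_d -> 'rV[Cplx]_d),
       row_free (\matrix_(i < d) y i) ->
       (forall i j, pb_pair (delta j) (y i) = (i == j)%:R) ->
       tenspow phi (@iter_comul Cplx d A n (tau a))
       = [ffun rc => \sum_(s : n.-tuple 'I_d)
            \tr (\prod_(k < n) psi a (delta (tnth s k)))
            * tensn (fun k => phi (y (tnth s k))) rc])
  /\
  (* (2) *)
  (forall (a b : I) (k : nat) (cs : 'I_k -> I)
          (T : 'M[Cplx]_(w a * w b, \sum_(i < k) w (cs i))),
     @boxdecomp Cplx d A I w psi a b k cs T ->
     pb_mulA A (tau a) (tau b) = \sum_(c : I) (pb_mult cs c)%:R *: tau c)
  /\
  (* the Z-span of the tau_a is closed under multiplication *)
  (forall alpha beta : I -> int,
     exists gamma : I -> int,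
       pb_mulA A (\sum_(a : I) (alpha a)%:~R *: tau a)
              (\sum_(b : I) (beta b)%:~R *: tau b)
       = \sum_(c : I) (gamma c)%:~R *: tau c).
Proof.
split; last split.
- by move=> a m phi _ n _ y delta _; apply: tenspow_iter_comul_char.
- by move=> a b k cs T; apply: mul_char_boxdecomp.
- by move=> alpha beta; apply: mul_int_comb_char.
Qed.
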